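(* Let $S$ be a semidomain. The following are equivalent: (a) $S$ is a BFS; (b) $S[x]$ is a BFS; (c) $S[x^{\pm1}]$ is a BFS.
   Context: A semidomain is a subset $S$ of an integral domain $R$ containing $0$ and $1$ and closed under addition and multiplication; $S^*=S\setminus\{0\}$ is a monoid under multiplication, with units forming $S^\times$. An atom is a nonunit $a\in S^*$ such that $a=bc$ with $b,c\in S^*$ forces $b$ or $c$ to be a unit; $S$ is atomic if every nonunit of $S^*$ is a finite product of atoms. $S$ is a bounded factorization semidomain (BFS) if $S$ is atomic and, for each nonunit $b\in S^*$, the set of lengths $\{\ell : b=a_1\cdots a_\ell \text{ with } a_i \text{ atoms}\}$ is finite. $S[x]$ (resp. $S[x^{\pm1}]$) is the semidomain of polynomials (resp. Laurent polynomials) in $R[x]$ (resp. $R[x^{\pm1}]$) with coefficients in $S$. *)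

From HB Require Import structures.
From mathcomp Require Import all_boot all_order all_algebra.
Set Implicit Arguments. Unset Strict Implicit. Unset Printing Implicit Defensive.
Import GRing.Theory.
Local Open Scope ring_scope.

Definition is_semidomain (R : idomainType) (S : R -> Prop) : Prop :=
  [/\ S 0, S 1, (forall a b, S a -> S b -> S (a + b))
    & (forall a b, S a -> S b -> S (a * b))].

Section Factorization.
Variables (T : idomainType) (S : T -> Prop).

Definition sunit (u : T) : Prop :=
  [/\ S u, u != 0 & exists v, [/\ S v, v != 0 & u * v = 1]].

Definition satom (a : T) : Prop :=
  [/\ S a, a != 0, ~ sunit a &
      forall b c, S b -> b != 0 -> S c -> c != 0 -> a = b * c ->
        sunit b \/ sunit c].

Definition factor_length (b : T) (l : nat) : Prop :=
  exists s : seq T, [/\ size s = l, (forall a, a \in s -> satom a)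
                     & b = \prod_(a <- s) a].

Definition atomic : Prop :=
  forall b, S b -> b != 0 -> ~ sunit b -> exists l, factor_length b l.

Definition BFS : Prop :=
  atomic /\
  forall b, S b -> b != 0 -> ~ sunit b ->
    exists N : nat, forall l, factor_length b l -> (l <= N)%N.

End Factorization.

Definition polyS (R : idomainType) (S : R -> Prop) : {poly R} -> Prop :=
  fun p => forall i, S p`_i.

(* S[x^{+-1}] : Laurent polynomials with coefficients in S, realized inside
   the integral domain Frac(R[x]) (which contains R[x^{+-1}]) as the elements
   p / x^n with p in S[x] and n : nat. *)
Definition laurentS (R : idomainType) (S : R -> Prop)
  : {fraction {poly R}} -> Prop :=
  fun f => exists (p : {poly R}) (n : nat),
    polyS S p /\ f = tofrac p / tofrac ('X^n).

From mathcomp Require Import all_boot all_order all_algebra.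
From Stdlib Require Import Classical ClassicalEpsilon Lia.
From mathcomp Require Import zify.
Set Implicit Arguments. Unset Strict Implicit. Unset Printing Implicit Defensive.
Import GRing.Theory.
Local Open Scope ring_scope.

(* S is a BFS iff it carries a length function: l : S^* -> nat with
   l(bc) >= l(b) + l(c) and l(b) > 0 for nonunits b.  For a BFS the maximal
   factorization length is one; conversely l(b) bounds the lengths of the
   factorizations of b, and induction on l(b) gives atomicity.  Length
   functions pull back along the embeddings S in S[x] in S[x^{+-1}], which
   reflect units.  Conversely a length function L on S extends to S[x] by
   l(p) = deg p + L(lead p), and to S[x^{+-1}] by applying this to the unique
   p in S[x] with p(0) != 0 and f = p x^m for some integer m. *)

Section LengthFunction.
Variables (T : idomainType) (S : T -> Prop).
Hypothesis hS : is_semidomain S.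

Let S1 : S 1. Proof. by case: hS. Qed.
Let SM a b : S a -> S b -> S (a * b). Proof. by case: hS => _ _ _ h; apply: h. Qed.

Let satom_behead a s : (forall x, x \in a :: s -> satom S x) ->
  forall x, x \in s -> satom S x.
Proof. by move=> atom_s x xs; apply: atom_s; rewrite inE xs orbT. Qed.

Lemma sunit1 : sunit S 1.
Proof. by split; rewrite ?oner_neq0 //; exists 1; rewrite oner_neq0 mulr1. Qed.

Lemma sunitM b c : sunit S b -> sunit S c -> sunit S (b * c).
Proof.
case=> Sb b0 [v [Sv v0 bv]] [Sc c0 [w [Sw w0 cw]]].
split; [exact: SM | exact: mulf_neq0 |].
exists (w * v); split; [exact: SM | exact: mulf_neq0 |].
by rewrite mulrA -(mulrA b) cw mulr1 bv.
Qed.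

Lemma sunit_factorl b c :
  S c -> c != 0 -> S b -> b != 0 -> sunit S (b * c) -> sunit S b.
Proof.
move=> Sc c0 Sb b0 [_ bc0 [v [Sv v0 e]]].
split => //; exists (c * v); rewrite mulrA; split => //; first exact: SM.
by apply/eqP => cv0; move: (oner_neq0 T); rewrite -e -mulrA cv0 mulr0 eqxx.
Qed.

Lemma sunit_factorr b c :
  S b -> b != 0 -> S c -> c != 0 -> sunit S (b * c) -> sunit S c.
Proof. by rewrite mulrC; apply: sunit_factorl. Qed.

Lemma prod_satom (s : seq T) : (forall a, a \in s -> satom S a) ->
  S (\prod_(a <- s) a) /\ \prod_(a <- s) a != 0.
Proof.
elim: s => [|a s IHs] atom_s; first by rewrite big_nil oner_neq0.
have [Sa a0 _ _] := atom_s a (mem_head _ _).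
have [Ss s0] := IHs (satom_behead atom_s).
by rewrite big_cons; split; [exact: SM | exact: mulf_neq0].
Qed.

Lemma satom_sunitMl u a : sunit S u -> satom S a -> satom S (u * a).
Proof.
move=> uu [Sa a0 ua atom_a]; have [Su u0 [v [Sv v0 uv]]] := uu.
split; [exact: SM | exact: mulf_neq0 | by move/(sunit_factorr Su u0 Sa a0) |].
move=> x y Sx x0 Sy y0 uaxy.
have a_vxy : a = (v * x) * y by rewrite -mulrA -uaxy mulrA [v * u]mulrC uv mul1r.
have [vx_unit|] := atom_a _ _ (SM Sv Sx) (mulf_neq0 v0 x0) Sy y0 a_vxy; last by right.
by left; rewrite -[x]mul1r -uv -mulrA; apply: sunitM.
Qed.

Lemma factor_lengthM b c k l : factor_length S b k -> factor_length S c l ->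
  factor_length S (b * c) (k + l).
Proof.
move=> [s [<- atom_s ->]] [t [<- atom_t ->]]; exists (s ++ t).
split; first by rewrite size_cat.
  by move=> x; rewrite mem_cat => /orP[]; [apply: atom_s | apply: atom_t].
by rewrite big_cat.
Qed.

(* A unit can be absorbed into the first atom of a nonempty factorization. *)
Lemma factor_length_sunitMl u c l : sunit S u -> (0 < l)%N ->
  factor_length S c l -> factor_length S (u * c) l.
Proof.
move=> uu l_gt0 [[|a s] [size_s atom_s ->]]; first by rewrite -size_s in l_gt0.
exists (u * a :: s); split => //; last by rewrite !big_cons mulrA.
move=> x; rewrite inE => /orP[/eqP ->|xs]; last by apply: (satom_behead atom_s).
exact: satom_sunitMl (atom_s _ (mem_head _ _)).
Qed.

Lemma factor_length_sunit b l : sunit S b -> factor_length S b l -> l = 0%N.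
Proof.
move=> ub [[|a s] [<- // atom_s b_as]].
have [Sa a0 ua _] := atom_s a (mem_head _ _).
have [Ss s0] := prod_satom (satom_behead atom_s).
by case: ua; apply: sunit_factorl Ss s0 Sa a0 _; rewrite b_as big_cons in ub.
Qed.

Lemma not_satom_split b : S b -> b != 0 -> ~ sunit S b -> ~ satom S b ->
  exists c d, [/\ S c /\ c != 0, S d /\ d != 0, b = c * d,
                  ~ sunit S c & ~ sunit S d].
Proof.
move=> Sb b0 ub not_atom; apply: NNPP => no_split; apply: not_atom.
split => // c d Sc c0 Sd d0 bcd; apply: NNPP => /not_or_and[uc ud].
by apply: no_split; exists c, d.
Qed.

Record length_function (l : T -> nat) : Prop := LengthFunction {
  length_superadditive : forall b c, S b -> b != 0 -> S c -> c != 0 ->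
    (l b + l c <= l (b * c)%R)%N;
  length_gt0 : forall b, S b -> b != 0 -> ~ sunit S b -> (0 < l b)%N }.

Section FromLengthFunction.
Variables (l : T -> nat) (hl : length_function l).

Lemma factor_length_le b k : factor_length S b k -> (k <= l b)%N.
Proof.
case=> s [<- {k} + ->]; elim: s => [|a s IHs] //= atom_s.
have [Sa a0 ua _] := atom_s a (mem_head _ _).
have [Ss s0] := prod_satom (satom_behead atom_s).
rewrite big_cons; apply: leq_trans (length_superadditive hl Sa a0 Ss s0).
by rewrite -add1n leq_add ?(length_gt0 hl) ?(IHs (satom_behead atom_s)).
Qed.

(* Strong induction on l b: a nonunit that is not an atom splits into two
   nonunits of strictly smaller length. *)
Lemma length_function_atomic : atomic S.
Proof.
move=> b; have [n] := ubnP (l b); elim: n b => // n IHn b lb_lt Sb b0 ub.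
have [|not_atom] := classic (satom S b).
  by exists 1%N, [:: b]; split; rewrite ?big_seq1 // => x; rewrite inE => /eqP ->.
have [c [d [[Sc c0] [Sd d0] bcd uc ud]]] := not_satom_split Sb b0 ub not_atom.
have := length_superadditive hl Sc c0 Sd d0; rewrite -bcd => le_cd_b.
have lc_gt0 := length_gt0 hl Sc c0 uc; have ld_gt0 := length_gt0 hl Sd d0 ud.
have [k fc] : exists k, factor_length S c k by apply: IHn => //; lia.
have [m fd] : exists m, factor_length S d m by apply: IHn => //; lia.
by exists (k + m)%N; rewrite bcd; apply: factor_lengthM.
Qed.

Lemma length_function_BFS : BFS S.
Proof.
split; first exact: length_function_atomic.
by move=> b _ _ _; exists (l b) => k; apply: factor_length_le.
Qed.

End FromLengthFunction.

Lemma bounded_nat_max (P : nat -> Prop) N : (exists n, P n) ->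
  (forall n, P n -> (n <= N)%N) -> exists m, P m /\ forall n, P n -> (n <= m)%N.
Proof.
elim: N => [|N IHN] [n Pn] le_N.
  by exists n; split=> // k /le_N; have := le_N _ Pn; lia.
have [PN|notPN] := classic (P N.+1); first by exists N.+1.
apply: IHN => [|k Pk]; first by exists n.
by rewrite -ltnS ltn_neqAle le_N // andbT; apply: contra_not_neq notPN => <-.
Qed.

(* The second clause lets units, which have no factorization of positive
   length, get length 0. *)
Definition max_length_spec b m :=
  (forall k, factor_length S b k -> (k <= m)%N) /\
  ((0 < m)%N -> factor_length S b m).

Definition max_length b : nat := epsilon (inhabits 0%N) (max_length_spec b).

Section FromBFS.
Hypothesis hB : BFS S.

Lemma max_lengthP b : S b -> b != 0 -> max_length_spec b (max_length b).
Proof.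
move=> Sb b0; apply: epsilon_spec.
have [ub|ub] := classic (sunit S b).
  by exists 0%N; split=> // k /(factor_length_sunit ub) ->.
have [N le_N] := hB.2 _ Sb b0 ub.
have [m [fm max_m]] := bounded_nat_max (hB.1 _ Sb b0 ub) le_N.
by exists m.
Qed.

Lemma max_length_sunit u : S u -> u != 0 -> sunit S u -> max_length u = 0%N.
Proof.
move=> Su u0 uu; have [_ fu] := max_lengthP Su u0.
by case: (posnP (max_length u)) => // /fu /(factor_length_sunit uu).
Qed.

Lemma max_length_gt0 b : S b -> b != 0 -> ~ sunit S b -> (0 < max_length b)%N.
Proof.
move=> Sb b0 ub; have [k fk] := hB.1 _ Sb b0 ub.
apply: leq_trans ((max_lengthP Sb b0).1 _ fk).
rewrite lt0n; apply/negP => /eqP k0; apply: ub.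
by move: fk; rewrite k0 => -[s [/size0nil -> _ ->]]; rewrite big_nil; apply: sunit1.
Qed.

Lemma BFS_length_function : length_function max_length.
Proof.
split=> [b c Sb b0 Sc c0|]; last exact: max_length_gt0.
have [le_bc _] := max_lengthP (SM Sb Sc) (mulf_neq0 b0 c0).
have [ub|ub] := classic (sunit S b).
  rewrite max_length_sunit // add0n; case: (posnP (max_length c)) => [-> //|lc].
  by apply: le_bc; apply: factor_length_sunitMl => //; apply: (max_lengthP Sc c0).2.
have [uc|uc] := classic (sunit S c).
  rewrite (max_length_sunit Sc c0 uc) addn0.
  case: (posnP (max_length b)) => [-> //|lb].
  rewrite [b * c]mulrC in le_bc *.
  by apply: le_bc; apply: factor_length_sunitMl => //; apply: (max_lengthP Sb b0).2.
apply: le_bc; apply: factor_lengthM.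
  by apply: (max_lengthP Sb b0).2; apply: max_length_gt0.
by apply: (max_lengthP Sc c0).2; apply: max_length_gt0.
Qed.

End FromBFS.

Lemma BFS_length_functionP : BFS S <-> exists l, length_function l.
Proof.
split=> [hB|[l hl]]; first by exists max_length; apply: BFS_length_function.
exact: length_function_BFS hl.
Qed.

End LengthFunction.

Lemma BFS_pullback (T U : idomainType) (S : T -> Prop) (S' : U -> Prop)
    (f : T -> U) :
  is_semidomain S -> is_semidomain S' -> {morph f : b c / b * c} ->
  (forall b, S b -> S' (f b)) -> (forall b, b != 0 -> f b != 0) ->
  (forall b, S b -> sunit S' (f b) -> sunit S b) -> BFS S' -> BFS S.
Proof.
move=> hS hS' fM fS f0 f_sunit /(BFS_length_functionP hS') [l hl].
apply/(BFS_length_functionP hS); exists (l \o f).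
split=> [b c Sb b0 Sc c0|b Sb b0 ub] /=.
  by rewrite fM; apply: (length_superadditive hl); by [apply: fS | apply: f0].
by apply: (length_gt0 hl); [apply: fS | apply: f0 | move/(f_sunit _ Sb)].
Qed.

Section PolynomialSemidomain.
Variables (R : idomainType) (S : R -> Prop).
Hypothesis hS : is_semidomain S.

Let S0 : S 0. Proof. by case: hS. Qed.
Let S1 : S 1. Proof. by case: hS. Qed.
Let SD a b : S a -> S b -> S (a + b). Proof. by case: hS => _ _ h _; apply: h. Qed.
Let SM a b : S a -> S b -> S (a * b). Proof. by case: hS => _ _ _ h; apply: h. Qed.

Lemma polyS_semidomain : is_semidomain (polyS S).
Proof.
split=> [i|i|p q Sp Sq i|p q Sp Sq i]; rewrite ?coef0 ?coef1 ?coefD ?coefM //.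
- by case: (i == 0)%N.
- exact: SD.
- by apply: (big_ind S) => // j _; apply: SM.
Qed.

Lemma polyS_C c : S c -> polyS S c%:P.
Proof. by move=> Sc i; rewrite coefC; case: (i == 0)%N. Qed.

Lemma polyS_MXn p n : polyS S p -> polyS S (p * 'X^n).
Proof. by move=> Sp i; rewrite coefMXn; case: (i < n)%N. Qed.

Lemma sunit_polyC c : sunit (polyS S) c%:P <-> sunit S c.
Proof.
split=> -[Sc c0]; last first.
  move=> [v [Sv v0 cv]]; split; [exact: polyS_C | by rewrite polyC_eq0 |].
  by exists v%:P; split; [exact: polyS_C | rewrite polyC_eq0 | rewrite -polyCM cv].
move=> [q [Sq q0 cq]].
have {}Sc : S c by have := Sc 0%N; rewrite coefC.
have cq0 : c * q`_0 = 1 by rewrite -coefCM cq coef1.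
split => //; first by rewrite -polyC_eq0.
exists q`_0; split => //.
by apply/eqP => q00; move: (oner_neq0 R); rewrite -cq0 q00 mulr0 eqxx.
Qed.

Lemma sunit_polyS_size p : sunit (polyS S) p -> size p = 1%N.
Proof.
case=> _ _ [q [_ _ pq]]; apply/eqP.
by have := size_mul_eq1 p q; rewrite pq size_poly1 eqxx => /esym/andP[].
Qed.

Lemma polyS_lead_coef p : polyS S p -> S (lead_coef p).
Proof. by move=> Sp; apply: Sp. Qed.

Definition poly_length (L : R -> nat) (p : {poly R}) : nat :=
  ((size p).-1 + L (lead_coef p))%N.

Section PolyLength.
Variables (L : R -> nat) (hL : length_function S L).

Lemma poly_length_superadditive p q :
  polyS S p -> p != 0 -> polyS S q -> q != 0 ->
  (poly_length L p + poly_length L q <= poly_length L (p * q))%N.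
Proof.
move=> Sp p0 Sq q0; rewrite /poly_length size_mul // lead_coefM.
have lp0 : lead_coef p != 0 by rewrite lead_coef_eq0.
have lq0 : lead_coef q != 0 by rewrite lead_coef_eq0.
rewrite addnACA; apply: leq_add; last first.
  exact: (length_superadditive hL (polyS_lead_coef Sp) lp0 (polyS_lead_coef Sq) lq0).
move: (size_poly_gt0 p) (size_poly_gt0 q); rewrite p0 q0.
by case: (size p) => // m; case: (size q) => // n; rewrite addSn addnS.
Qed.

Lemma poly_length_gt0 p :
  polyS S p -> p != 0 -> ~ sunit (polyS S) p -> (0 < poly_length L p)%N.
Proof.
move=> Sp p0 up; rewrite /poly_length.
have [/eqP/size_poly1P[c c0 pc]|size_p] := eqVneq (size p) 1%N.
  have Sc : S c by have := Sp 0%N; rewrite pc coefC.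
  have uc : ~ sunit S c by rewrite -sunit_polyC -pc.
  by rewrite pc lead_coefC addn_gt0 (length_gt0 hL) ?orbT.
by have := size_poly_gt0 p; rewrite p0; move: size_p => /eqP; lia.
Qed.

Lemma length_function_poly : length_function (polyS S) (poly_length L).
Proof.
by split; [apply: poly_length_superadditive | apply: poly_length_gt0].
Qed.

End PolyLength.

Lemma BFS_polyS : BFS (polyS S) <-> BFS S.
Proof.
split.
  apply: (BFS_pullback (f := @polyC R) hS polyS_semidomain) => [b c|c|c|c _].
  - exact: polyCM.
  - exact: polyS_C.
  - by rewrite polyC_eq0.
  - by rewrite sunit_polyC.
move=> /(BFS_length_functionP hS)[L hL].
apply/(BFS_length_functionP polyS_semidomain).
by exists (poly_length L); apply: length_function_poly.
Qed.

End PolynomialSemidomain.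

Lemma polyXn_neq0 (R : idomainType) n : ('X^n : {poly R}) != 0.
Proof. by rewrite -size_poly_gt0 size_polyXn. Qed.

Lemma poly_factor_Xn (R : idomainType) (p : {poly R}) : p != 0 ->
  exists k q, [/\ p = q * 'X^k, q`_0 != 0 & forall i, q`_i = p`_(i + k)].
Proof.
move=> p0; have ex_coef : exists i, p`_i != 0.
  by exists (size p).-1; rewrite -lead_coefE lead_coef_eq0.
have [k pk k_min] := ex_minnP ex_coef.
exists k, (drop_poly k p); split=> [||i]; rewrite ?coef_drop_poly //.
rewrite -[p in LHS](poly_take_drop k) [take_poly k p](_ : _ = 0) ?add0r //.
apply/polyP => i; rewrite coef_take_poly coef0; case: ltnP => // lt_ik.
by apply/eqP; apply: contraTT lt_ik => /k_min; rewrite -leqNgt.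
Qed.

Lemma mulXn_coef0_inj (R : idomainType) (p q : {poly R}) a b :
  p * 'X^a = q * 'X^b -> p`_0 != 0 -> q`_0 != 0 -> p = q.
Proof.
move=> pq p0 q0.
have le_ba : (b <= a)%N.
  have := congr1 (fun r : {poly R} => r`_a) pq; rewrite /= !coefMXn ltnn subnn.
  by case: ltnP => // _ pa; rewrite pa eqxx in p0.
have le_ab : (a <= b)%N.
  have := congr1 (fun r : {poly R} => r`_b) pq; rewrite /= !coefMXn ltnn subnn.
  by case: ltnP => // _ qb; rewrite -qb eqxx in q0.
by move: pq; rewrite (@anti_leq a b) ?le_ab //; apply/mulIf/polyXn_neq0.
Qed.

Section LaurentSemidomain.
Variables (R : idomainType) (S : R -> Prop).
Hypothesis hS : is_semidomain S.
Local Notation F := {fraction {poly R}}.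

Let PS := polyS_semidomain hS.
Let PD p q : polyS S p -> polyS S q -> polyS S (p + q).
Proof. by case: PS => _ _ h _; apply: h. Qed.
Let PM p q : polyS S p -> polyS S q -> polyS S (p * q).
Proof. by case: PS => _ _ _ h; apply: h. Qed.

Lemma tofracXn_neq0 n : tofrac ('X^n : {poly R}) != 0 :> F.
Proof. by rewrite tofrac_eq0 polyXn_neq0. Qed.

Lemma laurentS_semidomain : is_semidomain (laurentS S).
Proof.
split.
- by exists 0, 0%N; split; [case: PS | rewrite tofrac0 mul0r].
- by exists 1, 0%N; split; [case: PS | rewrite expr0 tofrac1 divr1].
- move=> f g [p [n [Sp ->]]] [q [m [Sq ->]]].
  exists (p * 'X^m + q * 'X^n), (n + m)%N.
  split; first by apply: PD; apply: (polyS_MXn hS).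
  by rewrite addf_div ?tofracXn_neq0 // exprD tofracD !tofracM.
- move=> f g [p [n [Sp ->]]] [q [m [Sq ->]]].
  exists (p * q), (n + m)%N; split; first exact: PM.
  by rewrite mulf_div exprD !tofracM.
Qed.

Lemma laurentS_polyC c : S c -> laurentS S (tofrac c%:P).
Proof.
move=> Sc; exists c%:P, 0%N.
by rewrite expr0 tofrac1 divr1; split; first exact: (polyS_C hS).
Qed.

Lemma sunit_laurentS_polyC c : S c -> sunit (laurentS S) (tofrac c%:P) -> sunit S c.
Proof.
move=> Sc [_ c0 [_ [[q [n [Sq ->]]] _ cq]]].
have {}c0 : c != 0 by apply: contraNneq c0 => ->; rewrite tofrac0.
have /eqP : tofrac (c%:P * q) = tofrac 'X^n :> F.
  rewrite tofracM; apply: (mulIf (invr_neq0 (tofracXn_neq0 n))).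
  by rewrite -mulrA cq divff ?tofracXn_neq0.
rewrite tofrac_eq => /eqP cqXn.
have cqn : c * q`_n = 1 by rewrite -coefCM cqXn coefXn eqxx.
split => //; exists q`_n; split => //.
by apply/eqP => qn0; move: (oner_neq0 R); rewrite -cqn qn0 mulr0 eqxx.
Qed.

(* Writing f = q x^(k - n) with q(0) != 0 determines q uniquely. *)
Definition laurent_normal (f : F) (q : {poly R}) : Prop :=
  [/\ polyS S q, q`_0 != 0 & exists k n, f = tofrac (q * 'X^k) / tofrac 'X^n].

Lemma laurent_normal_exists f :
  laurentS S f -> f != 0 -> exists q, laurent_normal f q.
Proof.
move=> [p [n [Sp f_pn]]] f0.
have p0 : p != 0 by apply: contraNneq f0 => p0; rewrite f_pn p0 tofrac0 mul0r.
have [k [q [pqk q0 qE]]] := poly_factor_Xn p0.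
by exists q; split => // [i|]; [rewrite qE | exists k, n; rewrite -pqk].
Qed.

Lemma laurent_normal_uniq f q1 q2 :
  laurent_normal f q1 -> laurent_normal f q2 -> q1 = q2.
Proof.
move=> [_ q10 [k1 [n1 ->]]] [_ q20 [k2 [n2 /eqP]]].
rewrite eqr_div ?tofracXn_neq0 // -!tofracM tofrac_eq -!mulrA -!exprD => /eqP.
by move/mulXn_coef0_inj; apply.
Qed.

Lemma laurent_normalM f g p q : laurent_normal f p -> laurent_normal g q ->
  laurent_normal (f * g) (p * q).
Proof.
move=> [Sp p0 [k1 [n1 ->]]] [Sq q0 [k2 [n2 ->]]]; split.
- exact: PM.
- by rewrite coef0M mulf_neq0.
- exists (k1 + k2)%N, (n1 + n2)%N.
  by rewrite mulf_div -!tofracM !exprD mulrACA.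
Qed.

Lemma laurent_normal_neq0 f q : laurent_normal f q -> q != 0.
Proof. by case=> _ q0 _; apply: contraNneq q0 => ->; rewrite coef0. Qed.

Lemma laurent_normal_sunit f q :
  laurent_normal f q -> sunit (polyS S) q -> sunit (laurentS S) f.
Proof.
move=> [Sq _ [k [n ->]]] uq.
have /eqP/size_poly1P[c c0 qc] := sunit_polyS_size uq.
have [Sc _ [v [Sv v0 cv]]] : sunit S c by rewrite -(sunit_polyC hS) -qc.
have monomial0 a m j : a != 0 -> tofrac (a%:P * 'X^m) / tofrac 'X^j != 0 :> F.
  move=> a0; rewrite mulf_neq0 ?invr_neq0 ?tofracXn_neq0 //.
  by rewrite tofrac_eq0 mulf_neq0 ?polyC_eq0 ?polyXn_neq0.
split.
- by exists (q * 'X^k), n; split => //; apply: (polyS_MXn hS).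
- by rewrite qc; apply: monomial0.
exists (tofrac (v%:P * 'X^n) / tofrac 'X^k); split.
- by exists (v%:P * 'X^n), k; split => //; apply: (polyS_MXn hS); apply: (polyS_C hS).
- exact: monomial0.
rewrite qc mulf_div -!tofracM (mulrACA c%:P) -polyCM cv mul1r [_ * 'X^n]mulrC.
by rewrite divff // tofrac_eq0 mulf_neq0 ?polyXn_neq0.
Qed.

Definition laurent_length (L : R -> nat) (f : F) : nat :=
  poly_length L (epsilon (inhabits 0) (laurent_normal f)).

Lemma laurent_length_normal L f q :
  laurent_normal f q -> laurent_length L f = poly_length L q.
Proof.
move=> fq; rewrite /laurent_length; congr poly_length.
have := epsilon_spec (inhabits 0) (laurent_normal f) (ex_intro _ q fq).
by move/laurent_normal_uniq; apply.
Qed.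

Lemma length_function_laurent L :
  length_function S L -> length_function (laurentS S) (laurent_length L).
Proof.
move=> hL; split=> [f g Lf f0 Lg g0|f Lf f0 uf].
  have [p fp] := laurent_normal_exists Lf f0.
  have [q gq] := laurent_normal_exists Lg g0.
  rewrite (laurent_length_normal _ fp) (laurent_length_normal _ gq).
  rewrite (laurent_length_normal _ (laurent_normalM fp gq)).
  have [Sp _ _] := fp; have [Sq _ _] := gq.
  exact: (poly_length_superadditive hL Sp (laurent_normal_neq0 fp) Sq
                                        (laurent_normal_neq0 gq)).
have [q fq] := laurent_normal_exists Lf f0; rewrite (laurent_length_normal _ fq).
have [Sq _ _] := fq; apply: (poly_length_gt0 hS hL Sq (laurent_normal_neq0 fq)).
by move/(laurent_normal_sunit fq).
Qed.

Lemma BFS_laurentS : BFS (laurentS S) <-> BFS S.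
Proof.
split.
  apply: (BFS_pullback (f := fun c => tofrac c%:P : F) hS laurentS_semidomain)
    => [b c|c|c|c].
  - by rewrite /= polyCM tofracM.
  - exact: laurentS_polyC.
  - by rewrite /= tofrac_eq0 polyC_eq0.
  - exact: sunit_laurentS_polyC.
move=> /(BFS_length_functionP hS)[L hL].
apply/(BFS_length_functionP laurentS_semidomain).
by exists (laurent_length L); apply: length_function_laurent.
Qed.

End LaurentSemidomain.

Theorem theorem4p3 (R : idomainType) (S : R -> Prop) :
  is_semidomain S ->
  (BFS S <-> BFS (polyS S)) /\ (BFS S <-> BFS (laurentS S)).
Proof.
by move=> hS; split; apply: iff_sym; [apply: BFS_polyS | apply: BFS_laurentS].
Qed.
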